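(* Let $G=\langle a,b\mid aba^{-1}=b^{-1}\rangle$ (the fundamental group of the Klein bottle). For $d\geq1$ put $$a_d=\begin{cases}1 & d\text{ odd},\\ \frac{d+6}{4} & d\equiv 2 \pmod 4,\\ \frac{d+4}{4} & d\equiv 0\pmod 4.\end{cases}$$ Then for every $n\geq1$ the number of conjugacy classes of subgroups of index $n$ in $G$ equals $\sum_{d\mid n}a_d$. *)

From mathcomp Require Import all_boot all_order all_algebra.
Set Implicit Arguments. Unset Strict Implicit. Unset Printing Implicit Defensive.
Import Order.TTheory GRing.Theory Num.Theory.
Local Open Scope ring_scope.

(* The Klein bottle group G = < a, b | a b a^-1 = b^-1 >, realised by its
   normal form: the pair (m, k) stands for b^m a^k.  Since a^k b^m = b^((-1)^k m) a^k,
   (b^m a^k)(b^m' a^k') = b^(m + (-1)^k m') a^(k+k'), i.e. G = Z \rtimes Z. *)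
Definition KG := (int * int)%type.

Definition ksign (k : int) : int := if odd `|k|%N then -1 else 1.

Definition kmul (x y : KG) : KG := (x.1 + ksign x.2 * y.1, x.2 + y.2).
Definition kinv (x : KG) : KG := (- (ksign x.2 * x.1), - x.2).
Definition kone : KG := (0, 0).
Definition ka : KG := (0, 1).
Definition kb : KG := (1, 0).

Definition is_subgroup (H : KG -> Prop) : Prop :=
  H kone /\ (forall x y, H x -> H y -> H (kmul x y)) /\ (forall x, H x -> H (kinv x)).

Definition has_index (H : KG -> Prop) (n : nat) : Prop :=
  exists r : 'I_n -> KG, forall g, exists! i : 'I_n, H (kmul (kinv (r i)) g).

Definition conjugate (H K : KG -> Prop) : Prop :=
  exists x : KG, forall g, K g <-> H (kmul (kmul (kinv x) g) x).

Definition num_conj_classes_index (n N : nat) : Prop :=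
  exists C : 'I_N -> (KG -> Prop),
    (forall i, is_subgroup (C i) /\ has_index (C i) n) /\
    (forall i j, conjugate (C i) (C j) -> i = j) /\
    (forall H, is_subgroup H -> has_index H n -> exists i, conjugate H (C i)).

Definition a_seq (d : nat) : nat :=
  if odd d then 1%N
  else if (d %% 4 == 2)%N then ((d + 6) %/ 4)%N
  else ((d + 4) %/ 4)%N.

(* A subgroup H of finite index n meets
   <b> in some <b^s> and maps onto some tZ under the exponent of a; choosing
   b^r a^t in H gives H = <b^s, b^r a^t>, of index s t = n, where only r mod s
   matters.  Conjugation preserves s and t, and acts on r by r -> -r (by a) and,
   for odd t, by r -> r + 2 (by b).  So the classes of index n are counted by the
   triples (s, t, r) with s t = n and r a canonical representative:
   r = 0 when s, t are odd, r in {0, 1} when t is odd and s even, and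
   0 <= r <= s/2 when t is even.  Regrouping these triples by the divisor d = s,
   2 s or 2 t of n gives a_d of them for each d. *)

From mathcomp Require Import all_boot all_order all_algebra.
From mathcomp Require Import zify ring.
From mathcomp Require Import boolp.
Import Order.TTheory GRing.Theory Num.Theory.
Set Implicit Arguments. Unset Strict Implicit. Unset Printing Implicit Defensive.
Local Open Scope ring_scope.

Lemma ksign_cases k : ksign k = 1 \/ ksign k = -1.
Proof. by rewrite /ksign; case: ifP; [right | left]. Qed.

Lemma ksignD k l : ksign (k + l) = ksign k * ksign l.
Proof. rewrite /ksign; do 3 case: ifP => ?; lia. Qed.

Lemma ksignN k : ksign (- k) = ksign k.
Proof. by rewrite /ksign abszN. Qed.

Lemma ksign_nat (t : nat) : ksign t%:Z = if odd t then -1 else 1.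
Proof. by []. Qed.

Lemma ksignMn (j : int) (t : nat) : ksign (j * t%:Z) = if odd t then ksign j else 1.
Proof. by rewrite /ksign abszM /= oddM; case: (odd t); rewrite ?andbT ?andbF. Qed.

Lemma ksign_sqr k : ksign k * ksign k = 1.
Proof. by case: (ksign_cases k) => ->. Qed.

Lemma kmulA : associative kmul.
Proof.
move=> [x1 x2] [y1 y2] [z1 z2]; rewrite /kmul /= ksignD; congr (_, _); ring.
Qed.

Lemma kmul1g : left_id kone kmul.
Proof. by move=> [x1 x2]; rewrite /kmul /= mul1r !add0r. Qed.

Lemma kmulg1 : right_id kone kmul.
Proof. by move=> [x1 x2]; rewrite /kmul /= mulr0 !addr0. Qed.

Lemma kmulVg x : kmul (kinv x) x = kone.
Proof. by case: x => x1 x2; rewrite /kmul /kinv /= ksignN addNr addrC subrr. Qed.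

Lemma kmulgV x : kmul x (kinv x) = kone.
Proof.
by case: x => x1 x2; rewrite /kmul /kinv /= mulrN mulrA ksign_sqr mul1r !subrr.
Qed.

Lemma kinvK : involutive kinv.
Proof.
by move=> [x1 x2]; rewrite /kinv /= ksignN mulrN !opprK mulrA ksign_sqr mul1r.
Qed.

Lemma kinvM x y : kinv (kmul x y) = kmul (kinv y) (kinv x).
Proof.
case: x => x1 x2; case: y => y1 y2; rewrite /kinv /kmul /= !ksignD ksignN.
congr (_, _); last ring.
by case: (ksign_cases x2) => ->; case: (ksign_cases y2) => ->; ring.
Qed.

Lemma kinv1 : kinv kone = kone.
Proof. by rewrite /kinv /= mulr0 oppr0. Qed.

Lemma kmulVpair (u v x k : int) : kmul (kinv (u, v)) (x, k) = (ksign v * (x - u), k - v).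
Proof. rewrite /kmul /kinv /= ksignN; congr (_, _); ring. Qed.

Lemma kconj_pair (u v y k : int) :
  kmul (kmul (kinv (u, v)) (y, k)) (u, v) = (ksign v * (y - u) + ksign (k - v) * u, k).
Proof. by rewrite kmulVpair /kmul /= subrK. Qed.

(** * Subgroups and their index *)

Section Subgroup.
Variable H : KG -> Prop.
Hypothesis subH : is_subgroup H.

Lemma subg1 : H kone. Proof. by case: subH. Qed.

Lemma subgM x y : H x -> H y -> H (kmul x y).
Proof. by case: subH => _ [mulH _]; apply: mulH. Qed.

Lemma subgV x : H x -> H (kinv x).
Proof. by case: subH => _ [_ invH]; apply: invH. Qed.

Lemma subg_coset_eq c g g' :
  H (kmul (kinv c) g) -> H (kmul (kinv c) g') -> H (kmul (kinv g) g').
Proof.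
move=> Hg Hg'; have := subgM (subgV Hg) Hg'.
by rewrite kinvM kinvK -kmulA (kmulA c) kmulgV kmul1g.
Qed.

Lemma has_index_coset_fun n : has_index H n ->
  exists (r : 'I_n -> KG) (f : KG -> 'I_n),
    (forall g, H (kmul (kinv (r (f g))) g)) /\
    (forall g i, H (kmul (kinv (r i)) g) -> i = f g).
Proof.
case=> r ex_r; exists r.
have ex_f g : exists i, H (kmul (kinv (r i)) g) by case: (ex_r g) => i [Hi _]; exists i.
exists (fun g => projT1 (cid (ex_f g))); split=> [g | g i Hi].
  by case: cid.
case: cid => /= j Hj; case: (ex_r g) => i' [_ uniq_i'].
by rewrite -(uniq_i' _ Hi) -(uniq_i' _ Hj).
Qed.

Lemma has_index_leq n m : has_index H n -> has_index H m -> (n <= m)%N.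
Proof.
move=> /has_index_coset_fun [r [f [_ f_uniq]]].
move=> /has_index_coset_fun [r' [f' [f'_mem _]]].
suff f'r_inj : injective (fun i => f' (r i)).
  by have := leq_card _ f'r_inj; rewrite !card_ord.
move=> i i' /= eq_f'; have := f'_mem (r i'); rewrite -eq_f' => Hi'.
have Hii' := subg_coset_eq (f'_mem (r i)) Hi'.
have Hi'i' : H (kmul (kinv (r i')) (r i')) by rewrite kmulVg; apply: subg1.
by rewrite (f_uniq _ _ Hii') -(f_uniq _ _ Hi'i').
Qed.

Lemma has_index_unique n m : has_index H n -> has_index H m -> n = m.
Proof.
by move=> Hn Hm; apply/eqP; rewrite eqn_leq (has_index_leq Hn Hm) (has_index_leq Hm Hn).
Qed.

Lemma has_index_pigeonhole n (F : nat -> KG) : has_index H n ->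
  exists i j, (i < j)%N /\ H (kmul (kinv (F i)) (F j)).
Proof.
move=> /has_index_coset_fun [r [f [f_mem _]]].
have : ~~ injectiveb (fun i : 'I_n.+1 => f (F i)).
  by apply/injectiveP => /leq_card; rewrite !card_ord ltnn.
case/injectivePn => i [j neq_ij eq_f].
have Hij : H (kmul (kinv (F i)) (F j)).
  by apply: (subg_coset_eq (f_mem (F i))); rewrite eq_f; apply: f_mem.
have [lt_ij | lt_ji] : (i < j)%N \/ (j < i)%N by move: neq_ij; rewrite neq_ltn => /orP.
- by exists i, j.
- by exists j, i; split=> //; have := subgV Hij; rewrite kinvM kinvK.
Qed.

End Subgroup.

Lemma has_index_ext H K n : (forall g, H g <-> K g) -> has_index H n -> has_index K n.
Proof.
move=> eqHK [r ex_r]; exists r => g; case: (ex_r g) => i [Hi uniq_i].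
by exists i; split=> [|j /eqHK]; [apply/eqHK | apply: uniq_i].
Qed.

(** * The subgroups <b^s, b^r a^t> *)

(* (b^r a^t)^j = b^(pow_coef t j * r) a^(j t): for even t the factors commute,
   for odd t the b-parts of two consecutive factors cancel. *)
Definition pow_coef (t : nat) (j : int) : int :=
  if odd t then (if odd `|j| then 1 else 0) else j.

Definition gpow (t : nat) (r j : int) : KG := (pow_coef t j * r, j * t%:Z).

Lemma pow_coef0 t : pow_coef t 0 = 0. Proof. by rewrite /pow_coef; case: ifP. Qed.

Lemma pow_coef1 t : pow_coef t 1 = 1. Proof. by rewrite /pow_coef; case: ifP. Qed.

Lemma pow_coefD t j j' :
  pow_coef t (j + j') = pow_coef t j + ksign (j * t%:Z) * pow_coef t j'.
Proof.
rewrite /pow_coef ksignMn /ksign; case: (odd t); last by rewrite mul1r.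
do 3 case: ifP => ?; lia.
Qed.

Lemma pow_coefN t j : pow_coef t (- j) = - (ksign (j * t%:Z) * pow_coef t j).
Proof.
rewrite /pow_coef ksignMn /ksign; case: (odd t); last by rewrite mul1r.
do 2 case: ifP => ?; lia.
Qed.

Lemma gpowD t r : {morph gpow t r : j j' / j + j' >-> kmul j j'}.
Proof. by move=> j j'; rewrite /kmul /gpow /= pow_coefD; congr (_, _); ring. Qed.

Lemma gpow1 t r : gpow t r 1 = (r, t%:Z).
Proof. by rewrite /gpow pow_coef1 !mul1r. Qed.

(* ksub s t r = <b^s, b^r a^t>, whose elements are the b^(m s) (b^r a^t)^j. *)
Definition ksub (s t : nat) (r : int) (g : KG) : Prop :=
  exists j m : int, g.2 = j * t%:Z /\ g.1 = m * s%:Z + pow_coef t j * r.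

Lemma ksub_subgroup s t r : is_subgroup (ksub s t r).
Proof.
split; [|split].
- by exists 0, 0; rewrite pow_coef0 !mul0r addr0.
- move=> [x k] [x' k'] [j [m [/= -> ->]]] [j' [m' [/= -> ->]]].
  exists (j + j'), (m + ksign (j * t%:Z) * m'); rewrite /kmul pow_coefD /=.
  by split; ring.
- move=> [x k] [j [m [/= -> ->]]].
  exists (- j), (- (ksign (j * t%:Z) * m)); rewrite /kinv pow_coefN /=.
  by split; ring.
Qed.

Lemma edivz_unique (x q : int) (d r : nat) : (r < d)%N -> x = q * d%:Z + r%:Z ->
  (x %% d)%Z = r /\ (x %/ d)%Z = q.
Proof.
move=> lt_rd ->; have d_neq0 : d%:Z != 0 by rewrite eqz_nat; case: d lt_rd.
have small_r : 0 <= r%:Z < d%:Z by rewrite lez_nat ltz_nat lt_rd.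
by rewrite modzMDl modz_small // divzMDl // divz_small ?addr0.
Qed.

Lemma ksub_coset s t r (u q : nat) x k : (u < s)%N -> (q < t)%N ->
  ksub s t r (kmul (kinv (u%:Z, q%:Z)) (x, k)) <->
  (k %% t)%Z = q /\ ((x - ksign q * (pow_coef t (k %/ t)%Z * r)) %% s)%Z = u.
Proof.
move=> lt_us lt_qt; rewrite kmulVpair; split.
- move=> [j [m [/= eq_k eq_x]]].
  have [-> ->] : (k %% t)%Z = q /\ (k %/ t)%Z = j by apply: edivz_unique => //; lia.
  have eq_x' : x - ksign q * (pow_coef t j * r) = ksign q * m * s + u.
    by case: (ksign_cases q) => e; rewrite e in eq_x *; lia.
  by have [] := edivz_unique lt_us eq_x'.
- move=> [kq xu]; set c := pow_coef t _ * r in xu *.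
  exists (k %/ t)%Z, (ksign q * ((x - ksign q * c) %/ s)%Z); split=> /=.
    by have := divz_eq k t; lia.
  have := divz_eq (x - ksign q * c) s; rewrite xu.
  by case: (ksign_cases q) => ->; lia.
Qed.

Lemma ksub_index s t r : (0 < s)%N -> (0 < t)%N -> has_index (ksub s t r) (s * t).
Proof.
move=> s_gt0 t_gt0.
exists (fun i : 'I_(s * t) => ((i %% s)%:Z, (i %/ s)%:Z)) => -[x k].
pose q := `|(k %% t)%Z|%N; pose u := `|((x - ksign q * (pow_coef t (k %/ t)%Z * r)) %% s)%Z|%N.
have lt_qt : (q < t)%N by rewrite /q; lia.
have lt_us : (u < s)%N by rewrite /u; lia.
have lt_i : (q * s + u < s * t)%N.
  by rewrite [(s * t)%N]mulnC -ltn_divLR // divnMDl // divn_small // addn0.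
exists (Ordinal lt_i); split=> [|i /ksub_coset /=].
  rewrite /= divnMDl // divn_small // addn0 modnMDl modn_small //.
  by apply/ksub_coset => //; split; [rewrite /q | rewrite /u]; lia.
have lt_i_s : (i %/ s < t)%N by rewrite ltn_divLR //; have := ltn_ord i; lia.
case/(_ (ltn_pmod i s_gt0) lt_i_s) => [iq iu]; apply: val_inj => /=.
have eq_q : q = (i %/ s)%N by rewrite /q; lia.
rewrite -eq_q in iu; have eq_u : u = (i %% s)%N by rewrite /u; lia.
by rewrite eq_q eq_u -divn_eq.
Qed.

(** * Every subgroup of finite index is some ksub s t r *)

Lemma subg_zpow H (phi : int -> KG) : is_subgroup H ->
  {morph phi : i j / i + j >-> kmul i j} -> H (phi 1) -> forall j, H (phi j).
Proof.
move=> subH phiD H1.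
have phi0 : phi 0 = kone.
  have := congr1 (kmul (kinv (phi 0))) (phiD 0 0).
  by rewrite addr0 kmulA kmulVg kmul1g.
have Hnat (N : nat) : H (phi N).
  elim: N => [|N IHN]; first by rewrite phi0; apply: subg1.
  by rewrite -addn1 PoszD phiD; apply: subgM.
case=> N //; rewrite NegzE.
have -> : phi (- N.+1%:Z) = kinv (phi N.+1).
  by rewrite -[LHS]kmulg1 -(kmulgV (phi N.+1)) kmulA -phiD addNr phi0 kmul1g.
exact: subgV.
Qed.

Lemma dvdz_min_pos (S : int -> Prop) (s : nat) : (0 < s)%N ->
  (forall x z, S x -> S (x - z * s%:Z)) ->
  (forall k : nat, (0 < k)%N -> S k%:Z -> (s <= k)%N) ->
  forall x, S x -> (s %| x)%Z.
Proof.
move=> s_gt0 S_sub s_min x Sx; apply/dvdz_mod0P.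
have Smod : S `|(x %% s)%Z|%N.
  by have := S_sub x (x %/ s)%Z Sx; congr S; have := divz_eq x s; lia.
apply: contraTeq isT => mod_neq0.
by have := s_min _ _ Smod; lia.
Qed.

Section Classification.
Variables (H : KG -> Prop) (s t : nat) (r : int).
Hypotheses (subH : is_subgroup H) (s_gt0 : (0 < s)%N) (t_gt0 : (0 < t)%N).
Hypotheses (Hs : H (s%:Z, 0)) (Hrt : H (r, t%:Z)).
Hypothesis s_min : forall k : nat, (0 < k)%N -> H (k%:Z, 0) -> (s <= k)%N.
Hypothesis t_min : forall k : nat, (0 < k)%N -> (exists x, H (x, k%:Z)) -> (t <= k)%N.

Let H_bpow m : H (m * s%:Z, 0).
Proof.
apply: (subg_zpow (phi := fun m => (m * s%:Z, 0))) => // [i j|].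
  by rewrite /kmul /= mul1r mulrDl addr0.
by rewrite mul1r.
Qed.

Let H_gpow j : H (gpow t r j).
Proof. by apply: subg_zpow => //; [apply: gpowD | rewrite gpow1]. Qed.

Let H_dvd_b x : H (x, 0) -> (s %| x)%Z.
Proof.
apply: (dvdz_min_pos (S := fun y => H (y, 0))) => // y z Hy.
by have := subgM subH Hy (H_bpow (- z)); rewrite /kmul /= mul1r addr0 mulNr.
Qed.

Let H_dvd_a x k : H (x, k) -> (t %| k)%Z.
Proof.
move=> Hxk; apply: (dvdz_min_pos (S := fun l => exists y, H (y, l))) => //; last by exists x.
move=> l z [y Hyl]; exists (y + ksign l * (pow_coef t (- z) * r)).
by have := subgM subH Hyl (H_gpow (- z)); rewrite /kmul /= mulNr.
Qed.

Lemma subgroup_eq_ksub g : H g <-> ksub s t r g.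
Proof.
case: g => x k; split=> [Hxk | [j [m [/= -> ->]]]].
  have /dvdzP [j eq_k] := H_dvd_a Hxk.
  have := subgM subH (subgV subH (H_gpow j)) Hxk.
  rewrite kmulVpair eq_k subrr => /H_dvd_b /dvdzP [m eq_m].
  exists j, (ksign (j * t%:Z) * m); split=> //=.
  by case: (ksign_cases (j * t%:Z)) => e; rewrite e in eq_m *; lia.
have := subgM subH (H_bpow m) (H_gpow j).
by rewrite /kmul /gpow /= mul1r add0r.
Qed.

End Classification.

Lemma ex_minn_pos (P : nat -> Prop) : (exists2 k, (0 < k)%N & P k) ->
  exists m, [/\ (0 < m)%N, P m & forall k, (0 < k)%N -> P k -> (m <= k)%N].
Proof.
case=> k k_gt0 Pk; have exP : exists k, (0 < k)%N && `[< P k >].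
  by exists k; rewrite k_gt0; apply/asboolP.
have [m /andP[m_gt0 /asboolP Pm] m_min] := ex_minnP exP.
by exists m; split=> // l l_gt0 Pl; apply: m_min; rewrite l_gt0; apply/asboolP.
Qed.

Lemma subgroup_index_ksub H n : is_subgroup H -> has_index H n ->
  exists s t r, [/\ (0 < s)%N, (0 < t)%N, (s * t = n)%N & forall g, H g <-> ksub s t r g].
Proof.
move=> subH Hn.
have /ex_minn_pos [s [s_gt0 Hs s_min]] : exists2 p, (0 < p)%N & H (p%:Z, 0).
  have [i [j [lt_ij Hij]]] := has_index_pigeonhole subH (fun i => (i%:Z, 0)) Hn.
  exists (j - i)%N; first by rewrite subn_gt0.
  by move: Hij; rewrite kmulVpair; congr H; congr pair; rewrite /ksign /=; lia.
have /ex_minn_pos [t [t_gt0 [r Hrt] t_min]] : exists2 p, (0 < p)%N & exists x, H (x, p%:Z).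
  have [i [j [lt_ij Hij]]] := has_index_pigeonhole subH (fun i => (0, i%:Z)) Hn.
  exists (j - i)%N; first by rewrite subn_gt0.
  by exists (ksign i * (0 - 0)); move: Hij; rewrite kmulVpair; congr H; congr pair; lia.
have eqHk := subgroup_eq_ksub subH s_gt0 t_gt0 Hs Hrt s_min t_min.
exists s, t, r; split=> //.
apply: (has_index_unique (ksub_subgroup s t r)); first exact: ksub_index.
exact: has_index_ext eqHk Hn.
Qed.

(** * Conjugacy classes of the ksub s t r *)

Lemma conjugate_refl H : conjugate H H.
Proof. by exists kone => g; rewrite kinv1 kmul1g kmulg1. Qed.

Lemma conjugate_sym H K : conjugate H K -> conjugate K H.
Proof.
move=> [x eqK]; exists (kinv x) => g; rewrite eqK kinvK.
by rewrite !kmulA kmulVg kmul1g -!kmulA kmulVg kmulg1.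
Qed.

Lemma conjugate_trans H K L : conjugate H K -> conjugate K L -> conjugate H L.
Proof. by move=> [x eqK] [y eqL]; exists (kmul y x) => g; rewrite eqL eqK kinvM !kmulA. Qed.

Lemma conjugate_ext H H' K K' : (forall g, H g <-> H' g) -> (forall g, K g <-> K' g) ->
  conjugate H K -> conjugate H' K'.
Proof. by move=> eqH eqK [x eqHK]; exists x => g; rewrite -eqK -eqH. Qed.

Lemma ksub_shift s t r z g : ksub s t r g <-> ksub s t (r + z * s%:Z) g.
Proof.
by split=> -[j [m [eq_k eq_x]]]; exists j;
  [exists (m - pow_coef t j * z) | exists (m + pow_coef t j * z)]; rewrite eq_x; split=> //; ring.
Qed.

Lemma ksub_conj_opp s t r : conjugate (ksub s t r) (ksub s t (- r)).
Proof.
exists ka => -[y k]; rewrite /ka kconj_pair subr0 mulr0 addr0 mulN1r.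
by split=> -[j [m [/= eq_k eq_x]]]; exists j, (- m); split=> //=; lia.
Qed.

(* Conjugate by b^z; the shift by 2 z comes from ksign (j t) = 1 - 2 pow_coef t j
   for odd t. *)
Lemma ksub_conj_add2 s t r z : odd t -> conjugate (ksub s t r) (ksub s t (r + 2 * z)).
Proof.
move=> odd_t; exists (z, 0) => -[y k]; rewrite kconj_pair subr0 (_ : ksign 0 = 1) // mul1r.
have sign_pow j : ksign (j * t%:Z) = 1 - 2 * pow_coef t j.
  by rewrite ksignMn odd_t /pow_coef odd_t /ksign; case: ifP.
by split=> -[j [m [/= -> eq_x]]]; exists j, m; rewrite sign_pow in eq_x *; split=> //=; lia.
Qed.

Lemma ksub_conj_modz (s t : nat) (r r' : int) : (s %| r' - r)%Z -> conjugate (ksub s t r) (ksub s t r').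
Proof.
case/dvdzP=> z eq_r'; have -> : r' = r + z * s%:Z by rewrite -eq_r' addrC subrK.
exact: conjugate_ext (fun g => iff_refl _) (ksub_shift s t r z) (conjugate_refl _).
Qed.

Lemma ksub_conj_mod2 (s t : nat) (r r' : int) : odd t -> (2 %| r' - r)%Z -> conjugate (ksub s t r) (ksub s t r').
Proof.
move=> odd_t /dvdzP [z eq_r']; have -> : r' = r + 2 * z by lia.
exact: ksub_conj_add2.
Qed.

(* Representatives of r under the moves r -> r + s, r -> - r and, for odd t, r -> r + 2. *)
Definition canon_res (s t r : nat) : bool :=
  if odd t then (if odd s then r == 0 else r <= 1)%N else (r <= s./2)%N.

Lemma ksub_conj_canon (s t : nat) (r : int) : (0 < s)%N ->
  exists2 r' : nat, canon_res s t r' & conjugate (ksub s t r) (ksub s t r').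
Proof.
move=> s_gt0; rewrite /canon_res; case odd_t: (odd t).
  case odd_s: (odd s).
    exists 0%N => //; apply: (@conjugate_trans _ (ksub s t (r * (1 + s%:Z)))).
      by apply: ksub_conj_modz; apply/dvdzP; exists r; ring.
    by apply: ksub_conj_mod2 => //; lia.
  by exists `|(r %% 2)%Z|%N; [lia | apply: ksub_conj_mod2 => //; lia].
have abs_mod : `|(r %% s)%Z|%N = r %% s :> int by lia.
have [le_rs | lt_sr] := leqP `|(r %% s)%Z|%N s./2.
  exists `|(r %% s)%Z|%N => //; apply: ksub_conj_modz; rewrite abs_mod.
  by apply/dvdzP; exists (- (r %/ s)%Z); have := divz_eq r s; lia.
exists (s - `|(r %% s)%Z|)%N; first by lia.
apply: conjugate_trans (ksub_conj_opp _ _ _) (ksub_conj_modz _ _).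
by apply/dvdzP; exists (1 + (r %/ s)%Z); have := divz_eq r s; lia.
Qed.

Lemma ksub_conj_dvd s t r s' t' r' : (0 < t)%N ->
  conjugate (ksub s t r) (ksub s' t' r') -> (s %| s')%N /\ (t %| t')%N.
Proof.
move=> t_gt0 [[u v] eqK]; have t_neq0 : t%:Z != 0 by rewrite eqz_nat -lt0n.
split.
  have : ksub s' t' r' (s'%:Z, 0) by exists 0, 1; rewrite pow_coef0; split=> /=; ring.
  move/eqK; rewrite kconj_pair => -[j [m [/= eq_j eq_x]]].
  have j0 : j = 0 by apply: (mulIf t_neq0); rewrite mul0r -eq_j.
  rewrite j0 pow_coef0 mul0r addr0 sub0r ksignN in eq_x.
  suff : (s%:Z %| s'%:Z)%Z by []; apply/dvdzP; exists (ksign v * m).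
  by case: (ksign_cases v) => e; rewrite e in eq_x *; lia.
have : ksub s' t' r' (r', t'%:Z) by exists 1, 0; rewrite pow_coef1; split=> /=; ring.
move/eqK; rewrite kconj_pair => -[j [m [/= eq_j _]]].
suff : (t%:Z %| t'%:Z)%Z by []; by apply/dvdzP; exists j.
Qed.

Lemma modz_small_eq (x y m : int) (s : nat) :
  0 <= x < s%:Z -> 0 <= y < s%:Z -> x = y + m * s%:Z -> x = y.
Proof.
move=> small_x small_y eq_x; have := modzMDl m y s.
by rewrite addrC -eq_x !modz_small.
Qed.

Lemma ksub_conj_canon_eq s t (r r' : nat) : (0 < s)%N -> (0 < t)%N ->
  canon_res s t r -> canon_res s t r' -> conjugate (ksub s t r) (ksub s t r') -> r = r'.
Proof.
move=> s_gt0 t_gt0 + + [[u v] eqK]; rewrite /canon_res.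
have : ksub s t r' (r'%:Z, t%:Z) by exists 1, 0; rewrite pow_coef1; split=> /=; ring.
move/eqK; rewrite kconj_pair => -[j [m [/= eq_j eq_x]]].
have t_neq0 : t%:Z != 0 by rewrite eqz_nat -lt0n.
have j1 : j = 1 by apply: (mulIf t_neq0); rewrite mul1r -eq_j.
rewrite j1 pow_coef1 mul1r ksignD ksignN ksign_nat in eq_x.
case: ifP eq_x => odd_t eq_x.
  case: ifP => [_ /eqP -> /eqP -> // | odd_s le_r1 le_r'1].
  have [h eq_s] : exists h, s = (2 * h)%N by exists s./2; lia.
  by rewrite eq_s in eq_x; case: (ksign_cases v) => e; rewrite e in eq_x; lia.
move=> le_r le_r'; apply/eqP; rewrite -eqz_nat; apply/eqP.
case: (ksign_cases v) => e; rewrite e in eq_x.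
  by apply: (@modz_small_eq _ _ (- m) s); lia.
have [eq_sum | lt_sum] : r + r' = s \/ (r + r' < s)%N by lia.
  by lia.
have : (r + r')%N = 0 :> int by apply: (@modz_small_eq _ _ (- m) s); lia.
by lia.
Qed.

(** * Counting *)

Lemma num_conj_classes_seq (T : eqType) n (L : seq T) (sub : T -> KG -> Prop) :
  uniq L ->
  {in L, forall x, is_subgroup (sub x) /\ has_index (sub x) n} ->
  {in L &, forall x y, conjugate (sub x) (sub y) -> x = y} ->
  (forall H, is_subgroup H -> has_index H n -> exists2 x, x \in L & conjugate H (sub x)) ->
  num_conj_classes_index n (size L).
Proof.
move=> uniqL subL conjL exL; pose tL := in_tuple L.
exists (fun i => sub (tnth tL i)); split; [|split].
- by move=> i; apply/subL/mem_tnth.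
- have /tuple_uniqP inj_tL : uniq tL by [].
  by move=> i j conj_ij; apply/inj_tL/conjL => //; apply: mem_tnth.
move=> H subH HH; have [x xL conjHx] := exL H subH HH.
have lt_x : (index x L < size L)%N by rewrite index_mem.
by exists (Ordinal lt_x); rewrite (tnth_nth x) nth_index.
Qed.

Local Open Scope nat_scope.

Definition canonical_triple n (T : nat * nat * nat) : bool :=
  let: (s, t, r) := T in [&& 0 < s, 0 < t, s * t == n & canon_res s t r].

(* The code (d, k), with d %| n and k < a_seq d, of a canonical triple (s, t, r):
   k = 0 codes (d, n %/ d, 0); for even d, 1 <= k <= d/4 codes (d/2, n %/ (d/2), k),
   and for d = 2 mod 4 the last code k = (d + 2)/4 codes (n %/ (d/2), d/2, 1). *)
Definition triple_of_code n d k : nat * nat * nat :=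
  if k == 0 then (d, n %/ d, 0)
  else if k <= d./2./2 then (d./2, n %/ d./2, k) else (n %/ d./2, d./2, 1).

Definition code_of_triple (T : nat * nat * nat) : nat * nat :=
  let: (s, t, r) := T in
  if r == 0 then (s, 0) else if ~~ odd t then (2 * s, r) else (2 * t, uphalf t).

Definition codes n : seq (nat * nat) :=
  [seq (d, k) | d <- divisors n, k <- iota 0 (a_seq d)].

Definition canonical_triples n := [seq triple_of_code n c.1 c.2 | c <- codes n].

Lemma a_seq_even d : ~~ odd d -> a_seq d = (d./2./2 + odd d./2).+1.
Proof. by move=> even_d; rewrite /a_seq (negbTE even_d); case: ifP => /eqP; lia. Qed.

Lemma mem_codes n d k : 0 < n -> ((d, k) \in codes n) = (d %| n) && (k < a_seq d).
Proof.
move=> n_gt0; apply/allpairsPdep/andP => [[d' [k' [d'n k'a [-> ->]]]] | [dn ka]].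
  by rewrite dvdn_divisors //; move: k'a; rewrite mem_iota.
by exists d, k; rewrite -dvdn_divisors // mem_iota.
Qed.

Lemma triple_of_codeK n d k : 0 < n -> d %| n -> k < a_seq d ->
  canonical_triple n (triple_of_code n d k) /\ code_of_triple (triple_of_code n d k) = (d, k).
Proof.
move=> n_gt0 dvd_dn lt_ka; have d_gt0 := dvdn_gt0 n_gt0 dvd_dn.
case/dvdnP: dvd_dn => q eq_n; have q_gt0 : 0 < q by move: n_gt0; rewrite eq_n; lia.
rewrite /triple_of_code; case: eqP => [-> | k_neq0].
  rewrite /canonical_triple /code_of_triple /canon_res eq_n mulnK // d_gt0 q_gt0 mulnC.
  by rewrite eqxx; case: (odd q); case: (odd d).
have [h eq_d] : exists h, d = 2 * h.
  have even_d : ~~ odd d by apply/negP => odd_d; move: lt_ka; rewrite /a_seq odd_d; lia.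
  by exists d./2; lia.
have half_d : (2 * h)./2 = h by lia.
move: lt_ka; rewrite eq_d a_seq_even ?half_d; last by rewrite oddM.
move=> lt_ka; have h_gt0 : 0 < h by lia.
have eq_n' : n = 2 * q * h by rewrite eq_n eq_d; lia.
have odd_2q : odd (2 * q) = false by rewrite oddM.
rewrite eq_n' mulnK // /canonical_triple /code_of_triple /canon_res.
have q2_gt0 : 0 < 2 * q by rewrite muln_gt0.
case: ifP => le_k /=.
  have -> : (k == 0) = false by apply/eqP.
  by rewrite odd_2q le_k [h * _]mulnC eqxx q2_gt0 h_gt0.
have odd_h : odd h by move: le_k lt_ka; case: (odd h); lia.
by rewrite odd_h odd_2q eqxx q2_gt0 h_gt0; split=> //; congr pair; move: le_k lt_ka; lia.
Qed.

Lemma code_of_tripleK n T : canonical_triple n T ->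
  let c := code_of_triple T in [/\ c.1 %| n, c.2 < a_seq c.1 & triple_of_code n c.1 c.2 = T].
Proof.
case: T => [[s t] r] /and4P[s_gt0 t_gt0 /eqP <-].
rewrite /canon_res /code_of_triple /triple_of_code => canon_r /=.
case: eqP => [-> | r_neq0] /=.
  by rewrite dvdn_mulr // mulKn // /a_seq; split=> //; do 2 case: ifP => //; lia.
have half_2 m : (2 * m)./2 = m by lia.
case odd_t: (odd t) canon_r => /=.
  case: ifP => [_ /eqP // | odd_s le_r1].
  have -> : r = 1 by lia.
  rewrite a_seq_even ?half_2 ?oddM // (_ : (uphalf t == 0) = false); last by lia.
  rewrite (_ : (uphalf t <= t./2) = false) ?mulnK //; last by lia.
  by split=> //; [apply/dvdnP; exists s./2 | ]; lia.
move=> le_r; have -> : (r == 0) = false by apply/eqP.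
rewrite a_seq_even ?half_2 ?le_r ?mulKn ?oddM //.
by split=> //; [apply/dvdnP; exists t./2 | ]; lia.
Qed.

Lemma size_canonical_triples n : size (canonical_triples n) = \sum_(d <- divisors n) a_seq d.
Proof.
rewrite size_map size_allpairs_dep sumnE big_map.
by apply: eq_bigr => d _; rewrite size_iota.
Qed.

Lemma uniq_canonical_triples n : 0 < n -> uniq (canonical_triples n).
Proof.
move=> n_gt0; rewrite map_inj_in_uniq.
  apply: allpairs_uniq_dep => [||[d k] [d' k'] _ _ [-> ->]] //.
    exact: divisors_uniq.
  by move=> d _; apply: iota_uniq.
move=> [d k] [d' k']; rewrite !mem_codes // => /andP[dvd_dn lt_ka] /andP[dvd_d'n lt_k'a] /= eq_T.
have [_ <-] := triple_of_codeK n_gt0 dvd_dn lt_ka.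
by have [_ <-] := triple_of_codeK n_gt0 dvd_d'n lt_k'a; rewrite eq_T.
Qed.

Lemma mem_canonical_triples n T : 0 < n -> (T \in canonical_triples n) = canonical_triple n T.
Proof.
move=> n_gt0; apply/mapP/idP => [[[d k]] | canon_T].
  by rewrite mem_codes // => /andP[dvd_dn lt_ka] ->; case: (triple_of_codeK n_gt0 dvd_dn lt_ka).
have [dvd_cn lt_ca eq_T] := code_of_tripleK canon_T.
exists (code_of_triple T); last by rewrite eq_T.
by case: (code_of_triple T) dvd_cn lt_ca => d k /= dvd_dn lt_ka; rewrite mem_codes // dvd_dn.
Qed.

Definition triple_ksub (T : nat * nat * nat) : KG -> Prop := ksub T.1.1 T.1.2 T.2.

Lemma canonical_triple_index n T : canonical_triple n T ->
  is_subgroup (triple_ksub T) /\ has_index (triple_ksub T) n.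
Proof.
case: T => [[s t] r] /and4P[s_gt0 t_gt0 /eqP <- _].
by split; [apply: ksub_subgroup | apply: ksub_index].
Qed.

Lemma canonical_triple_conj_eq n T T' : canonical_triple n T -> canonical_triple n T' ->
  conjugate (triple_ksub T) (triple_ksub T') -> T = T'.
Proof.
case: T T' => [[s t] r] [[s' t'] r'] /and4P[s_gt0 t_gt0 _ canon_r].
case/and4P=> s'_gt0 t'_gt0 _ canon_r' conj_TT'.
have [dvd_ss' dvd_tt'] := ksub_conj_dvd t_gt0 conj_TT'.
have [dvd_s's dvd_t't] := ksub_conj_dvd t'_gt0 (conjugate_sym conj_TT').
have eq_s : s = s' by apply/eqP; rewrite eqn_dvd dvd_ss'.
have eq_t : t = t' by apply/eqP; rewrite eqn_dvd dvd_tt'.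
subst s' t'; congr (_, _, _).
exact: ksub_conj_canon_eq s_gt0 t_gt0 canon_r canon_r' conj_TT'.
Qed.

Lemma subgroup_conj_canonical_triple n H : is_subgroup H -> has_index H n ->
  exists2 T, canonical_triple n T & conjugate H (triple_ksub T).
Proof.
move=> subH HH; have [s [t [r [s_gt0 t_gt0 eq_n eqH]]]] := subgroup_index_ksub subH HH.
have [r' canon_r' conj_rr'] := ksub_conj_canon t r s_gt0.
exists (s, t, r'); first by rewrite /canonical_triple s_gt0 t_gt0 eq_n eqxx.
exact: conjugate_ext (fun g => iff_sym (eqH g)) (fun g => iff_refl _) conj_rr'.
Qed.

Theorem proposition9p8 (n : nat) : (1 <= n)%N ->
  num_conj_classes_index n (\sum_(d <- divisors n) a_seq d)%N.
Proof.
move=> n_gt0; rewrite -size_canonical_triples.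
apply: (num_conj_classes_seq (uniq_canonical_triples n_gt0)).
- by move=> T; rewrite mem_canonical_triples //; apply: canonical_triple_index.
- by move=> T T'; rewrite !mem_canonical_triples //; apply: canonical_triple_conj_eq.
move=> H subH HH; have [T canon_T conj_HT] := subgroup_conj_canonical_triple subH HH.
by exists T; rewrite ?mem_canonical_triples.
Qed.
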